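(* Let $k$ be a positive integer and $C$ be a simplicial complex whose $1$-skeleton has a proper $2k$-colouring. Then $C$ has a proper edge-colouring with $2k-1$ colours.
   Context: An edge-colouring of a simplicial complex $C$ is proper if for every $2$-cell $f$ of $C$, any two distinct edges of $f$ receive distinct colours. *)

From mathcomp Require Import all_boot.
Set Implicit Arguments. Unset Strict Implicit. Unset Printing Implicit Defensive.

Definition simplicial_complex (V : finType) (C : {set {set V}}) : Prop :=
  (forall s : {set V}, s \in C -> s != set0) /\
  (forall s t : {set V}, s \in C -> t \subset s -> t != set0 -> t \in C).

Definition is_edge (V : finType) (C : {set {set V}}) (e : {set V}) : bool :=
  (e \in C) && (#|e| == 2).
Definition is_2cell (V : finType) (C : {set {set V}}) (f : {set V}) : bool :=
  (f \in C) && (#|f| == 3).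

Definition proper_skeleton_colouring (V : finType) (C : {set {set V}}) (n : nat)
    (c : V -> 'I_n) : Prop :=
  forall e, is_edge C e -> forall x y, x \in e -> y \in e -> x != y -> c x != c y.

Definition proper_edge_colouring (V : finType) (C : {set {set V}}) (m : nat)
    (col : {set V} -> 'I_m) : Prop :=
  forall f, is_2cell C f ->
  forall e1 e2, is_edge C e1 -> is_edge C e2 -> e1 \subset f -> e2 \subset f ->
    e1 != e2 -> col e1 != col e2.

(* Identify the 2k vertex colours with the vertices of the complete graph K_2k and colour the edges
   of the complex by the classical 1-factorisation of K_2k into 2k-1 perfect matchings.  Two
   distinct edges of a 2-cell share exactly one vertex, and the three vertices of the 2-cell have
   pairwise distinct colours, so the two edges are sent to distinct edges of K_2k through a common
   vertex, which lie in different matchings. *)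
From mathcomp Require Import all_boot zify.

Set Implicit Arguments.
Unset Strict Implicit.
Unset Printing Implicit Defensive.

Lemma eqn_mod_double m b b' : odd m -> (2 * b == 2 * b' %[mod m]) = (b == b' %[mod m]).
Proof.
move=> odd_m; apply/idP/idP => [|/eqP eq_bb']; last by rewrite -modnMmr eq_bb' modnMmr.
have half_double n : n = (m.+1)./2 * (2 * n) %[mod m].
  rewrite mulnA; have -> : (m.+1)./2 * 2 = m + 1.
    by rewrite muln2 halfK /= odd_m subn0 addn1.
  by rewrite mulnDl mul1n [m * n]mulnC modnMDl.
move=> /eqP eq2; rewrite (half_double b) (half_double b') -modnMmr eq2.
by rewrite modnMmr.
Qed.

(* The 1-factorisation GK_(m+1) of the complete graph on {0, ..., m} for odd m: vertex m is the
   point at infinity, and the edge {a, b} with a, b < m gets colour a + b mod m. *)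
Definition gk_colour (m a b : nat) : nat :=
  (if a == m then 2 * b else if b == m then 2 * a else a + b) %% m.

Lemma gk_colourC m a b : gk_colour m a b = gk_colour m b a.
Proof.
rewrite /gk_colour.
by have [<- | _] := eqVneq a m; have [-> | _] := eqVneq b a; rewrite ?eqxx // addnC.
Qed.

Lemma ltn_gk_colour m a b : 0 < m -> gk_colour m a b < m.
Proof. exact: ltn_pmod. Qed.

Lemma gk_colour_inj m a b b' :
  odd m -> a <= m -> b <= m -> b' <= m -> b != a -> b' != a -> b != b' ->
  gk_colour m a b != gk_colour m a b'.
Proof.
move=> odd_m am bm b'm ba b'a bb'; rewrite /gk_colour.
have [a_eq_m | a_neq_m] := eqVneq a m.
  by rewrite eqn_mod_double // !modn_small //; lia.
have [b_eq_m | b_neq_m] := eqVneq b m; have [b'_eq_m | b'_neq_m] := eqVneq b' m.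
- by rewrite b_eq_m b'_eq_m eqxx in bb'.
- by rewrite mul2n -addnn eqn_modDl !modn_small //; lia.
- by rewrite mul2n -addnn eqn_modDl !modn_small //; lia.
- by rewrite eqn_modDl !modn_small //; lia.
Qed.

Section EdgeValue.

Variables (V : finType) (T : Type).

(* Meaningful only on 2-element sets. *)
Definition edge_value (x0 : T) (f : V -> V -> T) (e : {set V}) : T :=
  if [pick x in e] is Some x then
    if [pick y in e :\ x] is Some y then f x y else x0
  else x0.

Lemma edge_value_set2 x0 f u v :
  (forall x y, f x y = f y x) -> u != v -> edge_value x0 f [set u; v] = f u v.
Proof.
move=> fC uv; rewrite /edge_value.
have pick_other w w' : w != w' -> [pick y in [set w; w'] :\ w] = Some w'.
  by move=> ww'; rewrite setU1K ?pick_set1 // inE.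
case: pickP => [x | /(_ u)]; last by rewrite !inE eqxx.
rewrite !inE => /orP[] /eqP ->; first by rewrite pick_other.
by rewrite setUC pick_other 1?eq_sym // fC.
Qed.

End EdgeValue.

Section Triangles.

Variable V : finType.

Lemma card2_set2 (e : {set V}) u v :
  #|e| = 2 -> u \in e -> v \in e -> u != v -> e = [set u; v].
Proof.
move=> e2 ue ve uv; apply/eqP; rewrite eq_sym eqEcard cards2 uv e2 leqnn andbT.
by apply/subsetP => w; rewrite !inE => /orP[] /eqP ->.
Qed.

Lemma two_edges_of_triangle (f e1 e2 : {set V}) :
  #|f| = 3 -> e1 \subset f -> e2 \subset f -> #|e1| = 2 -> #|e2| = 2 -> e1 != e2 ->
  exists z x y, [/\ e1 = [set z; x], e2 = [set z; y], z != x, z != y & x != y].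
Proof.
move=> f3 e1f e2f e1_2 e2_2 e12.
have /card_gt0P [z] : 0 < #|e1 :&: e2|.
  have : #|e1 :|: e2| <= #|f| by apply: subset_leq_card; rewrite subUset e1f e2f.
  by have := cardsUI e1 e2; rewrite e1_2 e2_2 f3; lia.
rewrite inE => /andP[z1 z2].
have /card_gt0P [x] : 0 < #|e1 :\ z| by move: e1_2; rewrite (cardsD1 z e1) z1; lia.
rewrite !inE => /andP[xz x1].
have /card_gt0P [y] : 0 < #|e2 :\ z| by move: e2_2; rewrite (cardsD1 z e2) z2; lia.
rewrite !inE => /andP[yz y2].
have e1E : e1 = [set z; x] by apply: card2_set2; rewrite // eq_sym.
have e2E : e2 = [set z; y] by apply: card2_set2; rewrite // eq_sym.
exists z, x, y; split; rewrite // 1?eq_sym //.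
by apply: contraNneq e12 => xy; rewrite e1E e2E xy.
Qed.

Lemma proper_skeleton_colouring_inj n (C : {set {set V}}) (c : V -> 'I_n) s :
  simplicial_complex C -> proper_skeleton_colouring C c -> s \in C -> {in s &, injective c}.
Proof.
move=> [_ C_closed] c_proper sC x y xs ys; apply: contra_eq => xy.
apply: (c_proper [set x; y]); rewrite ?inE ?eqxx ?orbT //.
rewrite /is_edge cards2 xy eqxx andbT; apply: (C_closed s) => //.
  by rewrite subUset !sub1set xs ys.
by apply/set0Pn; exists x; rewrite !inE eqxx.
Qed.

End Triangles.

Theorem proposition7p1 (k : nat) (V : finType) (C : {set {set V}}) :
  0 < k -> simplicial_complex C ->
  (exists c : V -> 'I_(2 * k), proper_skeleton_colouring C c) ->
  exists col : {set V} -> 'I_(2 * k - 1), proper_edge_colouring C col.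
Proof.
move=> k_gt0 complexC [c c_proper].
set m := 2 * k - 1.
have m_gt0 : 0 < m by lia.
have odd_m : odd m by rewrite oddB ?odd_mul //; lia.
have c_le_m u : c u <= m by have := ltn_ord (c u); rewrite /m; lia.
pose pair_colour x y : 'I_m := Ordinal (ltn_gk_colour (c x) (c y) m_gt0).
have pair_colourC x y : pair_colour x y = pair_colour y x by apply: val_inj; apply: gk_colourC.
exists (edge_value (Ordinal m_gt0) pair_colour).
move=> f /andP[fC /eqP f3] e1 e2 /andP[_ /eqP e1_2] /andP[_ /eqP e2_2] e1f e2f e12.
have [z [x [y [e1E e2E zx zy xy]]]] := two_edges_of_triangle f3 e1f e2f e1_2 e2_2 e12.
move: e1f e2f; rewrite e1E e2E !subUset !sub1set => /andP[zf xf] /andP[_ yf].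
have c_inj := proper_skeleton_colouring_inj complexC c_proper fC.
have c_neq u v : u \in f -> v \in f -> u != v -> c u != c v.
  by move=> uf vf; apply: contra_neq; apply: c_inj.
rewrite !edge_value_set2 //; apply/negP => /eqP /(congr1 val) /= /eqP; apply/negP.
by apply: gk_colour_inj; rewrite // c_neq // eq_sym.
Qed.
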